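(* Let $k,l$ be positive integers, let $G$ be a $k$-degenerate graph and $H$ an $l$-degenerate graph. Then $AT(G+_R H)\le k+l+1$.
   Context: A graph is $k$-degenerate if its vertices can be successively deleted so that each deleted vertex has degree at most $k$ at the time of deletion. For an orientation $D$, a subdigraph is Eulerian if every vertex has equal in- and outdegree in it; $D$ is an AT-orientation if the numbers of Eulerian subgraphs with an even and with an odd number of arcs differ; $AT(G)$ is the smallest $k$ such that $G$ has an AT-orientation of maximum outdegree at most $k-1$. $R(G)$ has vertex set $V(G)\cup E(G)$ and consists of $G$ together with, for each edge $e=xy$, a new vertex $e$ adjacent to $x$ and $y$. $G+_R H$ has vertex set $(V(G)\cup E(G))\times V(H)$, with $(u_1,u_2)\sim(v_1,v_2)$ iff [$u_1=v_1\in V(G)$ and $u_2v_2\in E(H)$] or [$u_2=v_2$ and $u_1v_1\in E(R(G))$]. *)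

(* Finite simple graphs are given as a relation g : rel V on a
   finType V (assumed symmetric and irreflexive in the theorem). *)
From mathcomp Require Import all_boot.
Set Implicit Arguments.
Unset Strict Implicit.
Unset Printing Implicit Defensive.

Section Graphs.
Variable V : finType.
Implicit Types (g : rel V) (D A : {set V * V}).

(* k-degenerate: an ordering of all vertices (the deletion order) such that
   each vertex, when deleted, has at most k neighbours among the vertices
   still present (i.e. those deleted later). *)
Definition degenerate g (k : nat) : Prop :=
  exists s : seq V, perm_eq s (enum V) /\
    forall s1 x s2, s = s1 ++ x :: s2 -> count (g x) s2 <= k.

Definition orientation g D : bool :=
  [forall x, forall y,
     (((x, y) \in D) ==> g x y) &&
     (g x y ==> (((x, y) \in D) (+) ((y, x) \in D)))].

Definition outdeg D (v : V) : nat := #|[set w | (v, w) \in D]|.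
Definition indeg D (v : V) : nat := #|[set w | (w, v) \in D]|.

Definition eulerian_sub D A : bool :=
  (A \subset D) && [forall v, outdeg A v == indeg A v].

Definition EE D : nat := #|[set A | eulerian_sub D A & ~~ odd #|A|]|.
Definition EO D : nat := #|[set A | eulerian_sub D A & odd #|A|]|.

Definition AT_orientation g D : bool := orientation g D && (EE D != EO D).

Definition AT_prop g (k : nat) : bool :=
  [exists D, AT_orientation g D && [forall v, outdeg D v < k]].

(* existence: the acyclic orientation by enum_rank *)
Definition D0 g : {set V * V} :=
  [set p | g p.1 p.2 && (enum_rank p.1 < enum_rank p.2)].

Lemma D0_eulerian_empty g A : eulerian_sub (D0 g) A -> A = set0.
Proof.
case/andP=> sub /forallP eul.
apply/eqP; apply/negPn/negP=> /set0Pn [p0 p0A].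
have [p pA pmax] : exists2 p, p \in A & forall q, q \in A -> enum_rank q.2 <= enum_rank p.2.
  by case: (arg_maxnP (fun q : V * V => (enum_rank q.2 : nat)) p0A) => q qA qm; exists q => // r rA; exact: qm.
have : indeg A p.2 != 0.
  by rewrite /indeg cards_eq0; apply/set0Pn; exists p.1; rewrite inE -surjective_pairing.
rewrite -(eqP (eul p.2)) /outdeg cards_eq0 => /set0Pn [w]; rewrite inE => wA.
have := subsetP sub _ wA; rewrite inE /= => /andP [_ lt].
by have := pmax _ wA; rewrite /= leqNgt lt.
Qed.

Lemma AT_prop_simple g : symmetric g -> irreflexive g -> AT_prop g #|V|.+1.
Proof.
move=> gsym girr.
apply/existsP; exists (D0 g); apply/andP; split.
  apply/andP; split.
    apply/forallP=> x; apply/forallP=> y; apply/andP; split.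
      by apply/implyP; rewrite inE => /andP [].
    apply/implyP=> gxy; rewrite !inE /= gxy -gsym gxy /=.
    have nxy : x != y by apply/eqP=> exy; move: gxy; rewrite exy girr.
    have : enum_rank x != enum_rank y by rewrite (inj_eq enum_rank_inj).
    by rewrite neq_ltn; case/orP=> h; rewrite h ?(ltnW h) // ltnNge (ltnW h).
  have E : [set A | eulerian_sub (D0 g) A] = [set set0].
    apply/setP=> A; rewrite !inE; apply/idP/eqP; first exact: D0_eulerian_empty.
    move=> ->; rewrite /eulerian_sub sub0set /=; apply/forallP=> v.
    by rewrite /outdeg /indeg; apply/eqP; apply: eq_card => w; rewrite !inE.
  have -> : EO (D0 g) = 0.
    apply/eqP; rewrite /EO cards_eq0; apply/eqP/setP=> A; rewrite !inE.
    apply/negbTE/negP=> /andP [/D0_eulerian_empty -> ]; by rewrite cards0.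
  have e0 : set0 \in [set A | eulerian_sub (D0 g) A] by rewrite E set11.
  rewrite /EE -lt0n card_gt0; apply/set0Pn; exists set0.
  by rewrite !inE cards0 andbT; rewrite inE in e0.
by apply/forallP=> v; rewrite ltnS max_card.
Qed.

(* AT(G): the smallest k such that G has an AT-orientation of maximum
   outdegree at most k-1.  Such a k exists iff AT_prop g #|V|.+1 holds (every
   outdegree is at most #|V|); this is always the case for simple graphs
   (AT_prop_simple).  The fallback value 0 is never used for simple graphs. *)
Definition AT g : nat :=
  match AT_prop g #|V|.+1 =P true with
  | ReflectT H => ex_minn (ex_intro (AT_prop g) #|V|.+1 H)
  | ReflectF _ => 0
  end.

End Graphs.

Section Constructions.
Variables (V W : finType) (g : rel V) (h : rel W).

(* edges of G, identified with 2-element vertex sets {x, y} with xy in E(G) *)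
Definition is_edge (s : {set V}) : bool :=
  [exists x, exists y, g x y && (s == [set x; y])].
Definition edge_of : Type := {s : {set V} | is_edge s}.

(* vertex set V(G) u E(G) of R(G) *)
Definition RV : finType := (V + edge_of)%type.

Definition Rrel : rel RV := fun a b =>
  match a, b with
  | inl x, inl y => g x y
  | inl x, inr e => x \in val e
  | inr e, inl x => x \in val e
  | inr _, inr _ => false
  end.

Definition is_vertex (a : RV) : bool := if a is inl _ then true else false.

Definition Rprod : rel (RV * W) := fun u v =>
  [&& u.1 == v.1, is_vertex u.1 & h u.2 v.2] || ((u.2 == v.2) && Rrel u.1 v.1).

End Constructions.

Arguments is_edge {V} g s.
Arguments edge_of {V} g.
Arguments RV {V} g.
Arguments Rrel {V} g a b.
Arguments Rprod {V W} g h u v.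

From mathcomp Require Import all_boot.

Set Implicit Arguments.
Unset Strict Implicit.
Unset Printing Implicit Defensive.

(* If the vertices are ranked injectively so that every vertex has at most m
   neighbours of larger rank, orienting each edge towards the larger rank gives
   an acyclic orientation of maximum outdegree m.  Its only Eulerian subgraph
   is the empty one, so it is an AT-orientation and AT <= m + 1.  For G +_R H
   take the edge-vertices first (each has only two neighbours, and k + l >= 2)
   and then the vertex-vertices (v, w) lexicographically by the degeneracy
   ranks of v in G and of w in H: the later neighbours of (v, w) are later
   neighbours of v in its G-fibre or of w in its H-fibre, at most k + l. *)

Definition forward (T : finType) (r : rel T) (f : T -> nat) (x : T) : {set T} :=
  [set y | r x y & f x < f y].

Lemma index_lt_cat (T : eqType) (s1 s2 : seq T) (x y : T) :
  uniq (s1 ++ x :: s2) -> y \in s1 ++ x :: s2 ->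
  (index x (s1 ++ x :: s2) < index y (s1 ++ x :: s2)) = (y \in s2).
Proof.
rewrite cat_uniq /= => /and4P [_ /norP [xNs1 /hasPn s1Ns2] xNs2 _].
rewrite !index_cat (negbTE xNs1) /= eqxx addn0 mem_cat inE.
case: ifP => [ys1 _ | _ /= yxs2].
  by rewrite ltnNge index_size; apply/esym/negP => /s1Ns2; rewrite ys1.
rewrite -{1}[size s1]addn0 ltn_add2l eq_sym.
by case: eqP yxs2 => [->|_] //=; rewrite (negbTE xNs2).
Qed.

Lemma degenerate_rank (V : finType) (g : rel V) (k : nat) :
  degenerate g k -> exists f : V -> nat,
    [/\ injective f, forall x, f x < #|V| & forall x, #|forward g f x| <= k].
Proof.
case=> s [s_enum s_degen].
have s_all x : x \in s by rewrite (perm_mem s_enum) mem_enum.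
have s_uniq : uniq s by rewrite (perm_uniq s_enum) enum_uniq.
exists (index ^~ s); split=> [x y | x | x]; first exact: index_inj (s_all x) (s_all y).
  by rewrite cardE -(perm_size s_enum) index_mem.
have s_x := s_all x; move: s_uniq s_all s_degen.
case/splitPr: s_x => s1 s2 s_uniq s_all /(_ s1 x s2 erefl).
apply: leq_trans; apply: eq_leq.
have s2_uniq : uniq [seq y <- s2 | g x y].
  by apply: filter_uniq; move: s_uniq; rewrite cat_uniq /= => /and4P [_ _ _].
rewrite -size_filter -(card_uniqP s2_uniq); apply: eq_card => y.
by rewrite !inE mem_filter index_lt_cat // andbC.
Qed.

Section RankOrientation.
Variables (T : finType) (r : rel T) (f : T -> nat).

Definition rank_orient : {set T * T} := [set p | r p.1 p.2 & f p.1 < f p.2].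

Lemma outdeg_rank_orient x : outdeg rank_orient x = #|forward r f x|.
Proof. by apply: eq_card => y; rewrite !inE. Qed.

(* Along every arc the rank increases, so an arc of A entering a vertex of
   maximal rank cannot be balanced by an arc of A leaving it. *)
Lemma eulerian_rank_orient A : eulerian_sub rank_orient A -> A = set0.
Proof.
case/andP=> /subsetP A_sub /forallP A_bal; apply/eqP; apply: contraT.
case/set0Pn=> p0 /(arg_maxnP (fun p => f p.2)) [p pA p_max].
have : indeg A p.2 != 0.
  by rewrite cards_eq0; apply/set0Pn; exists p.1; rewrite inE -surjective_pairing.
rewrite -(eqP (A_bal p.2)) cards_eq0 => /set0Pn [y]; rewrite inE => arcA.
have := A_sub _ arcA; rewrite inE => /andP [_].
by have /= := p_max _ arcA; rewrite /= leqNgt => /negbTE ->.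
Qed.

Lemma rank_orient_AT : symmetric r -> irreflexive r -> injective f ->
  AT_orientation r rank_orient.
Proof.
move=> r_sym r_irr f_inj; apply/andP; split.
  apply/forallP=> x; apply/forallP=> y; rewrite !inE /=.
  apply/andP; split; first by apply/implyP => /andP [].
  apply/implyP=> rxy; rewrite (r_sym y) rxy /=.
  have : f x != f y by rewrite (inj_eq f_inj); apply: contraTneq rxy => ->; rewrite r_irr.
  by rewrite neq_ltn => /orP [lt | lt]; rewrite lt ltnNge ltnW.
have EO0 : EO rank_orient = 0.
  apply/eqP; rewrite cards_eq0; apply/eqP/setP=> A; rewrite !inE.
  by apply/negbTE/andP => [[/eulerian_rank_orient ->]]; rewrite cards0.
rewrite EO0 -lt0n card_gt0; apply/set0Pn; exists set0.
rewrite !inE cards0 /eulerian_sub sub0set andbT /=.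
by apply/forallP=> v; rewrite /outdeg /indeg; apply/eqP; apply: eq_card => w; rewrite !inE.
Qed.

Lemma AT_le_forward m : symmetric r -> irreflexive r -> injective f ->
  (forall x, #|forward r f x| <= m) -> AT r <= m.+1.
Proof.
move=> r_sym r_irr f_inj forward_le.
have AT_m : AT_prop r m.+1.
  apply/existsP; exists rank_orient; rewrite rank_orient_AT //=.
  by apply/forallP=> x; rewrite outdeg_rank_orient ltnS.
rewrite /AT; case: (AT_prop r #|T|.+1 =P true) => // AT_T.
by case: ex_minnP => n _ /(_ _ AT_m).
Qed.

End RankOrientation.

Section ReplacementProduct.
Variables (V W : finType) (g : rel V) (h : rel W).

Lemma Rrel_sym : symmetric g -> symmetric (Rrel g).
Proof. by move=> g_sym [x|e] [y|e'] //=; rewrite g_sym. Qed.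

Lemma Rprod_sym : symmetric g -> symmetric h -> symmetric (Rprod g h).
Proof.
move=> g_sym h_sym [a w] [b w']; rewrite /Rprod /= Rrel_sym // (eq_sym a) (eq_sym w).
by case: eqP => [->|] //=; rewrite h_sym.
Qed.

Lemma Rprod_irr : irreflexive g -> irreflexive h -> irreflexive (Rprod g h).
Proof. by move=> g_irr h_irr [[x|e] w]; rewrite /Rprod /= ?eqxx /= ?h_irr ?g_irr. Qed.

Lemma card_edge_le2 (e : edge_of g) : #|val e| <= 2.
Proof.
case/existsP: (valP e) => x /existsP [y] /andP [_ /eqP ->].
by rewrite cards2 ltnS leq_b1.
Qed.

Variables (fg : V -> nat) (fh : W -> nat).

Definition Rprod_rank (p : RV g * W) : nat :=
  match p with
  | (inl v, w) => #|{: RV g * W}| + (fg v * #|W| + fh w)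
  | (inr _, _) => enum_rank p
  end.

Lemma Rprod_rank_edge_lt_vertex e w v w' :
  Rprod_rank (inr e, w) < Rprod_rank (inl v, w').
Proof. exact: leq_trans (ltn_ord _) (leq_addr _ _). Qed.

Lemma forward_Rprod_vertex v w :
  forward (Rprod g h) Rprod_rank (inl v, w) \subset
    [set ((inl v', w) : RV g * W) | v' in forward g fg v]
      :|: [set ((inl v, w') : RV g * W) | w' in forward h fh w].
Proof.
apply/subsetP=> [[[v'|e'] w']]; rewrite !inE /Rprod /=; last first.
  by rewrite ltnNge ltnW ?Rprod_rank_edge_lt_vertex ?andbF.
rewrite ltn_add2l => /andP [/orP [/andP [/eqP [<-] hww'] | /andP [/eqP <- gvv']]] lt.
  apply/orP; right; apply/imsetP; exists w' => //.
  by rewrite inE hww' -(ltn_add2l (fg v * #|W|)).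
apply/orP; left; apply/imsetP; exists v' => //.
have W_gt0 : 0 < #|W| by apply/card_gt0P; exists w.
by rewrite inE gvv' -(ltn_pmul2r W_gt0) -(ltn_add2r (fh w)).
Qed.

Lemma forward_Rprod_edge e w :
  forward (Rprod g h) Rprod_rank (inr e, w) \subset
    [set ((inl x, w) : RV g * W) | x in val e].
Proof.
apply/subsetP=> [[[x|e'] w']]; rewrite !inE /Rprod /= ?andbF //.
by case/andP=> /andP [/eqP <- xe] _; apply/imsetP; exists x.
Qed.

Lemma forward_Rprod_le k l : 0 < k -> 0 < l ->
  (forall x, #|forward g fg x| <= k) -> (forall y, #|forward h fh y| <= l) ->
  forall p, #|forward (Rprod g h) Rprod_rank p| <= k + l.
Proof.
move=> k_gt0 l_gt0 fg_le fh_le [[v|e] w].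
  apply: leq_trans (subset_leq_card (forward_Rprod_vertex v w)) _.
  apply: leq_trans (leq_card_setU _ _) (leq_add _ _).
    exact: leq_trans (leq_imset_card _ _) (fg_le v).
  exact: leq_trans (leq_imset_card _ _) (fh_le w).
apply: leq_trans (subset_leq_card (forward_Rprod_edge e w)) _.
apply: leq_trans (leq_imset_card _ _) (leq_trans (card_edge_le2 e) _).
by rewrite -addn1 leq_add.
Qed.

Hypotheses (fg_inj : injective fg) (fh_inj : injective fh) (fh_lt : forall w, fh w < #|W|).

Lemma Rprod_rank_inj : injective Rprod_rank.
Proof.
move=> [[v|e] w] [[v'|e'] w'] eq_rank.
- have W_gt0 : 0 < #|W| := leq_ltn_trans (leq0n _) (fh_lt w).
  move/addnI: eq_rank => eq_rank.
  have eq_fh : fh w = fh w'.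
    by have := congr1 (modn^~ #|W|) eq_rank; rewrite !modnMDl !modn_small.
  rewrite eq_fh in eq_rank; move/addIn/eqP: eq_rank; rewrite eqn_pmul2r //.
  by move=> /eqP /fg_inj ->; rewrite (fh_inj eq_fh).
- by have := Rprod_rank_edge_lt_vertex e' w' v w; rewrite -eq_rank ltnn.
- by have := Rprod_rank_edge_lt_vertex e w v' w'; rewrite eq_rank ltnn.
- exact/enum_rank_inj/ord_inj.
Qed.

End ReplacementProduct.

Theorem corollary3p6 (V W : finType) (g : rel V) (h : rel W) (k l : nat) :
  0 < k -> 0 < l ->
  symmetric g -> irreflexive g ->
  symmetric h -> irreflexive h ->
  degenerate g k -> degenerate h l ->
  AT (Rprod g h) <= k + l + 1.
Proof.
move=> k_gt0 l_gt0 g_sym g_irr h_sym h_irr /degenerate_rank [fg [fg_inj _ fg_le]].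
case/degenerate_rank=> fh [fh_inj fh_lt fh_le].
rewrite addn1; apply: (@AT_le_forward _ _ (Rprod_rank (g := g) fg fh)).
- exact: Rprod_sym.
- exact: Rprod_irr.
- exact: Rprod_rank_inj.
- exact: forward_Rprod_le.
Qed.
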